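(* Let $\hat H(w)=e^{-w}$, and let $\alpha,\beta\in\mathbb{R}$ with $\beta>1$ and $\beta>\alpha^2/4$. For $\tilde\tau>0$ and $\omega>0$, the number $i\omega$ is a root of $\Phi(w)=0$ if and only if there exist $k\in\mathbb{Z}$ and a sign $\pm$ such that $$\omega=\omega_k^{\pm}:=\pm\tfrac12\arccos\frac{\alpha}{2\sqrt\beta}+k\pi-\arctan\sqrt{\sqrt\beta-1}\quad\text{and}\quad \tilde\tau=\frac{\omega_k^{\pm}}{\sqrt{\sqrt\beta-1}}.$$ If $\beta\le 1$ and $\beta>\alpha^2/4$, there is no $\tilde\tau>0$ for which $\Phi$ has a root $i\omega$ with $\omega>0$.
   Context: For a delay-to-time-constant ratio $\tilde\tau>0$ and $\alpha,\beta\in\mathbb{R}$, the rescaled characteristic equation of the linearized coupled Wilson–Cowan system with kernel transform $\hat H$ is $$\Phi(w):=(w+\tilde\tau)^4-\alpha\,\tilde\tau^2(w+\tilde\tau)^2\hat H(w)^2+\beta\,\tilde\tau^4\hat H(w)^4=0.$$ For the Dirac (discrete) delay kernel, $\hat H(w)=e^{-w}$. *)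

From Stdlib Require Import Reals ZArith.
From Coquelicot Require Import Coquelicot.
Open Scope R_scope.

Definition Cexp (z : C) : C :=
  (exp (Re z) * cos (Im z), exp (Re z) * sin (Im z)).

Definition Hhat_dirac (w : C) : C := Cexp (Copp w).

Definition Phi (Hhat : C -> C) (alpha beta tau : R) (w : C) : C :=
  Cplus (Cminus (Cpow (Cplus w (RtoC tau)) 4)
          (Cmult (RtoC (alpha * tau ^ 2))
                 (Cmult (Cpow (Cplus w (RtoC tau)) 2) (Cpow (Hhat w) 2))))
        (Cmult (RtoC (beta * tau ^ 4)) (Cpow (Hhat w) 4)).

(* omega_k^{+/-}, with sign s in {1,-1}. *)
Definition omega_k (alpha beta s : R) (k : Z) : R :=
  s * (/2 * acos (alpha / (2 * sqrt beta))) + IZR k * PI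
  - atan (sqrt (sqrt beta - 1)).

(* Write e = e^{i omega}.  Since H(i omega) e = 1, multiplying Phi(i omega) by
   e^4 (a homogeneous rescaling of the quartic form u^4 - A u^2 h^2 + B h^4)
   shows that Phi(i omega) = 0 iff z^2 - alpha tau^2 z + beta tau^4 = 0 for
   z = u^2, u = (i omega + tau) e = a + i b.  When alpha^2/4 < beta this real
   quadratic has the two non-real roots alpha tau^2/2 +- i tau^2 (beta -
   alpha^2/4)^{1/2}, so the root condition becomes
     Re z = a^2 - b^2 = alpha tau^2 / 2   and   |z|^2 = (tau^2 + omega^2)^2 = beta tau^4.
   The modulus condition is impossible for beta <= 1 and forces
   omega = tau c, c = (sqrt beta - 1)^{1/2}, for beta > 1.  Then
   u = tau (1 + i c) e is in polar form, Re z = tau^2 sqrt beta cos (2 (omega +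
   atan c)), and the real-part condition becomes an equation cos x = cos theta
   whose solutions are x = +-theta + 2 k pi, i.e. omega = omega_k^{+-}. *)

From Stdlib Require Import Reals ZArith Lra Psatz.
From Coquelicot Require Import Coquelicot.
Open Scope R_scope.

Definition quartic (A B : R) (u h : C) : C :=
  Cplus (Cminus (Cpow u 4) (Cmult (RtoC A) (Cmult (Cpow u 2) (Cpow h 2))))
        (Cmult (RtoC B) (Cpow h 4)).

Lemma Phi_quartic (Hhat : C -> C) (alpha beta tau : R) (w : C) :
  Phi Hhat alpha beta tau w =
  quartic (alpha * tau ^ 2) (beta * tau ^ 4) (Cplus w (RtoC tau)) (Hhat w).
Proof. reflexivity. Qed.

(* Homogeneity of degree 4: the zeros of the form are invariant under
   multiplying both arguments by a unit, so h can be normalised to 1. *)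
Lemma quartic_normalise (A B : R) (u h e : C) :
  Cmult h e = RtoC 1 ->
  (quartic A B u h = RtoC 0 <-> quartic A B (Cmult u e) (RtoC 1) = RtoC 0).
Proof.
  intros Hhe.
  assert (Hscale : quartic A B (Cmult u e) (Cmult h e)
                   = Cmult (Cpow e 4) (quartic A B u h))
    by (unfold quartic; ring).
  assert (Hunscale : quartic A B u h
                     = Cmult (Cpow h 4) (quartic A B (Cmult u e) (Cmult h e))).
  { rewrite Hscale.
    transitivity (Cmult (Cpow (Cmult h e) 4) (quartic A B u h)); [|ring].
    rewrite Hhe, Cpow_1_l; ring. }
  rewrite <- Hhe; split; intros Hzero.
  - rewrite Hscale, Hzero; ring.
  - rewrite Hunscale, Hzero; ring.
Qed.

(* At h = 1 the form is the quadratic z^2 - A z + B in z = u^2; its real and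
   imaginary parts in terms of x = Re z = a^2 - b^2, y = Im z = 2ab. *)
Lemma quartic_at_one (A B a b : R) :
  quartic A B (a, b) (RtoC 1) =
  (let x := a ^ 2 - b ^ 2 in let y := 2 * a * b in
   (x ^ 2 - y ^ 2 - A * x + B, 2 * x * y - A * y)).
Proof.
  unfold quartic, Cminus, Cplus, Copp, Cmult, RtoC; simpl.
  apply injective_projections; simpl; ring.
Qed.

Lemma quadratic_complex_roots (A B x y : R) : A ^ 2 < 4 * B ->
  (x ^ 2 - y ^ 2 - A * x + B = 0 /\ 2 * x * y - A * y = 0 <->
   x = A / 2 /\ y ^ 2 = B - A ^ 2 / 4).
Proof.
  intros Hdisc; split.
  - intros [Hre Him].
    assert (Hfactor : y * (2 * x - A) = 0) by lra.
    destruct (Rmult_integral _ _ Hfactor) as [Hy | Hx].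
    + subst y. exfalso. assert (0 <= (2 * x - A) ^ 2) by apply pow2_ge_0. nra.
    + assert (x = A / 2) by lra. subst x. split; [reflexivity | nra].
  - intros [-> Hy]. split; nra.
Qed.

Lemma quartic_at_one_zero_iff (A B a b : R) : A ^ 2 < 4 * B ->
  (quartic A B (a, b) (RtoC 1) = RtoC 0 <->
   a ^ 2 - b ^ 2 = A / 2 /\ (a ^ 2 + b ^ 2) ^ 2 = B).
Proof.
  intros Hdisc.
  rewrite quartic_at_one; cbv zeta.
  assert (Hmod : (a ^ 2 + b ^ 2) ^ 2 = (a ^ 2 - b ^ 2) ^ 2 + (2 * a * b) ^ 2)
    by ring.
  pose proof (quadratic_complex_roots A B (a ^ 2 - b ^ 2) (2 * a * b) Hdisc)
    as [Hroots Hroots_back].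
  unfold RtoC; split.
  - intros Hzero. injection Hzero as Hre Him.
    destruct (Hroots (conj Hre Him)). split; nra.
  - intros [Hre Hnorm].
    destruct Hroots_back as [Hre' Him]; [split; nra |]. f_equal; assumption.
Qed.

(* Polar form: (1 + i c) e^{i w} = (1 + c^2)^{1/2} e^{i (w + atan c)}, hence
   Re ((tau (1 + i c) e^{i w})^2) = tau^2 (1 + c^2) cos (2 (w + atan c)). *)
Lemma polar_real_part (tau w c : R) :
  (tau * cos w - tau * c * sin w) ^ 2 - (tau * sin w + tau * c * cos w) ^ 2
  = tau ^ 2 * (1 + c ^ 2) * cos (2 * (w + atan c)).
Proof.
  assert (Hpos : 0 < 1 + c²) by (pose proof (Rle_0_sqr c); lra).
  set (r := sqrt (1 + c²)).
  assert (Hr : 0 < r) by (apply sqrt_lt_R0; exact Hpos).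
  assert (Hr2 : r ^ 2 = 1 + c ^ 2)
    by (unfold r; rewrite pow2_sqrt by lra; unfold Rsqr; ring).
  replace (2 * (w + atan c)) with (2 * w + 2 * atan c) by ring.
  rewrite cos_plus, cos_2a, sin_2a, cos_2a, sin_2a, cos_atan, sin_atan.
  fold r. rewrite <- Hr2. field. lra.
Qed.

Lemma cos_period_Z (x : R) (k : Z) : cos (x + 2 * IZR k * PI) = cos x.
Proof.
  destruct k as [|p|p].
  - simpl. f_equal; ring.
  - rewrite <- (positive_nat_Z p), <- INR_IZR_INZ. apply cos_period.
  - change (IZR (Z.neg p)) with (- IZR (Z.pos p)).
    rewrite <- (positive_nat_Z p), <- INR_IZR_INZ.
    rewrite <- (cos_period (x + 2 * - INR (Pos.to_nat p) * PI) (Pos.to_nat p)).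
    f_equal; ring.
Qed.

Lemma cos_eq_iff (x y : R) :
  cos x = cos y <->
  exists (k : Z) (s : R), (s = 1 \/ s = -1) /\ x = s * y + 2 * IZR k * PI.
Proof.
  split.
  - intros Hcos.
    assert (Hdiff : cos x - cos y = 0) by lra.
    rewrite form2 in Hdiff.
    destruct (Rmult_integral _ _ Hdiff) as [Hsum | Hdif].
    + destruct (Rmult_integral _ _ Hsum) as [H2 | Hsin]; [lra |].
      destruct (sin_eq_0_0 _ Hsin) as [k Hk].
      exists k, 1. split; [left; reflexivity | lra].
    + destruct (sin_eq_0_0 _ Hdif) as [k Hk].
      exists k, (-1). split; [right; reflexivity | lra].
  - intros (k & s & Hs & ->).
    rewrite cos_period_Z.
    destruct Hs as [-> | ->].
    + f_equal; ring.
    + replace (-1 * y) with (- y) by ring. apply cos_neg.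
Qed.

Lemma cos_condition_iff_omega_k (alpha beta omega : R) :
  cos (2 * (omega + atan (sqrt (sqrt beta - 1))))
    = cos (acos (alpha / (2 * sqrt beta))) <->
  exists (k : Z) (s : R), (s = 1 \/ s = -1) /\ omega = omega_k alpha beta s k.
Proof.
  unfold omega_k. rewrite cos_eq_iff.
  split; intros (k & s & Hs & Heq); exists k, s; split; auto; lra.
Qed.

Lemma acos_argument_bound (alpha beta : R) : alpha ^ 2 / 4 < beta ->
  -1 <= alpha / (2 * sqrt beta) <= 1.
Proof.
  intros Hab.
  assert (Hsb : 0 < sqrt beta) by (apply sqrt_lt_R0; nra).
  assert (Hsb2 : sqrt beta ^ 2 = beta) by (apply pow2_sqrt; nra).
  set (q := alpha / (2 * sqrt beta)).
  assert (Hq : alpha = 2 * sqrt beta * q) by (unfold q; field; lra).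
  assert (Halpha2 : alpha ^ 2 = 4 * sqrt beta ^ 2 * q ^ 2) by (rewrite Hq; ring).
  assert (Hq2 : sqrt beta ^ 2 * (q ^ 2 - 1) < 0) by lra.
  assert (q ^ 2 < 1) by nra.
  split; nra.
Qed.

(* Phi(i omega) = 0 in the coordinates a + i b = (i omega + tau) e^{i omega}:
   the real-part and modulus conditions, with |a + i b|^2 = tau^2 + omega^2. *)
Lemma Phi_imaginary_root_iff (alpha beta tau omega : R) :
  0 < tau -> alpha ^ 2 / 4 < beta ->
  Phi Hhat_dirac alpha beta tau (0, omega) = RtoC 0 <->
  (tau * cos omega - omega * sin omega) ^ 2
    - (tau * sin omega + omega * cos omega) ^ 2 = alpha * tau ^ 2 / 2 /\
  (tau ^ 2 + omega ^ 2) ^ 2 = beta * tau ^ 4.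
Proof.
  intros Htau Hab.
  assert (Hunit : Cmult (Hhat_dirac (0, omega)) (cos omega, sin omega) = RtoC 1).
  { unfold Hhat_dirac, Cexp, Copp, Cmult, RtoC; simpl.
    rewrite Ropp_0, exp_0, cos_neg, sin_neg.
    pose proof (sin2_cos2 omega) as Hpyth; unfold Rsqr in Hpyth.
    apply injective_projections; simpl; nra. }
  assert (Hu : Cmult (Cplus (0, omega) (RtoC tau)) (cos omega, sin omega) =
               (tau * cos omega - omega * sin omega,
                tau * sin omega + omega * cos omega)).
  { unfold Cplus, Cmult, RtoC; simpl. apply injective_projections; simpl; ring. }
  assert (Hdisc : (alpha * tau ^ 2) ^ 2 < 4 * (beta * tau ^ 4))
    by (assert (0 < tau ^ 4) by (apply pow_lt; lra); nra).
  assert (Hmod : (tau * cos omega - omega * sin omega) ^ 2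
                 + (tau * sin omega + omega * cos omega) ^ 2 = tau ^ 2 + omega ^ 2)
    by (pose proof (sin2_cos2 omega) as Hpyth; unfold Rsqr in Hpyth; nra).
  rewrite Phi_quartic, (quartic_normalise _ _ _ _ _ Hunit), Hu,
    quartic_at_one_zero_iff, Hmod by exact Hdisc.
  split; intros [Hre Hnorm]; split; lra.
Qed.

Lemma modulus_condition_iff (beta tau omega : R) :
  1 <= beta -> 0 < tau -> 0 < omega ->
  (tau ^ 2 + omega ^ 2) ^ 2 = beta * tau ^ 4 <->
  omega = tau * sqrt (sqrt beta - 1).
Proof.
  intros Hb Htau Homega.
  set (sb := sqrt beta).
  assert (Hsb2 : sb ^ 2 = beta) by (apply pow2_sqrt; lra).
  assert (Hsb : 1 <= sb) by (rewrite <- sqrt_1; apply sqrt_le_1_alt; lra).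
  set (c := sqrt (sb - 1)).
  assert (Hc2 : c ^ 2 = sb - 1) by (apply pow2_sqrt; lra).
  assert (Hc : 0 <= c) by apply sqrt_pos.
  rewrite <- Hsb2. split.
  - intros Hnorm.
    assert (Hsq : tau ^ 2 + omega ^ 2 = sb * tau ^ 2).
    { assert (Hfactor : (tau ^ 2 + omega ^ 2 - sb * tau ^ 2)
                        * (tau ^ 2 + omega ^ 2 + sb * tau ^ 2) = 0) by nra.
      destruct (Rmult_integral _ _ Hfactor); nra. }
    assert (Hfactor : (omega - tau * c) * (omega + tau * c) = 0) by nra.
    destruct (Rmult_integral _ _ Hfactor); nra.
  - intros ->. replace (tau ^ 2 + (tau * c) ^ 2) with (sb * tau ^ 2); nra.
Qed.

Lemma Phi_imaginary_root_polar (alpha beta tau omega : R) :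
  1 < beta -> alpha ^ 2 / 4 < beta -> 0 < tau -> 0 < omega ->
  Phi Hhat_dirac alpha beta tau (0, omega) = RtoC 0 <->
  omega = tau * sqrt (sqrt beta - 1) /\
  cos (2 * (omega + atan (sqrt (sqrt beta - 1)))) = alpha / (2 * sqrt beta).
Proof.
  intros Hb Hab Htau Homega.
  rewrite Phi_imaginary_root_iff, modulus_condition_iff by lra.
  set (c := sqrt (sqrt beta - 1)).
  assert (Hsb : 1 < sqrt beta) by (rewrite <- sqrt_1; apply sqrt_lt_1_alt; lra).
  assert (Hc2 : 1 + c ^ 2 = sqrt beta) by (unfold c; rewrite pow2_sqrt; lra).
  assert (Htau2 : 0 < tau ^ 2 * sqrt beta) by (apply Rmult_lt_0_compat; nra).
  split.
  - intros [Hre ->]; split; [reflexivity |].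
    rewrite polar_real_part, Hc2 in Hre.
    apply (Rmult_eq_reg_l (tau ^ 2 * sqrt beta)); [| lra].
    rewrite Hre. field. lra.
  - intros [-> Hangle]; split; [| reflexivity].
    rewrite polar_real_part, Hc2, Hangle. field. lra.
Qed.

Theorem mainTheorem7 (alpha beta : R) :
  (1 < beta -> alpha ^ 2 / 4 < beta ->
   forall tau omega : R, 0 < tau -> 0 < omega ->
   (Phi Hhat_dirac alpha beta tau (0, omega) = RtoC 0 <->
    exists (k : Z) (s : R), (s = 1 \/ s = -1) /\
      omega = omega_k alpha beta s k /\
      tau = omega_k alpha beta s k / sqrt (sqrt beta - 1)))
  /\
  (beta <= 1 -> alpha ^ 2 / 4 < beta ->
   ~ exists tau omega : R, 0 < tau /\ 0 < omega /\
       Phi Hhat_dirac alpha beta tau (0, omega) = RtoC 0).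
Proof.
  split.
  - intros Hb Hab tau omega Htau Homega.
    assert (Hc : 0 < sqrt (sqrt beta - 1)).
    { apply sqrt_lt_R0. rewrite <- sqrt_1 at 1. apply Rlt_Rminus, sqrt_lt_1_alt; lra. }
    rewrite Phi_imaginary_root_polar by assumption.
    rewrite <- (cos_acos _ (acos_argument_bound _ _ Hab)), cos_condition_iff_omega_k.
    split.
    + intros [Homega_c (k & s & Hs & Hk)].
      exists k, s. rewrite <- Hk. repeat split; auto.
      rewrite Homega_c. field. lra.
    + intros (k & s & Hs & Hk & Htau_k). rewrite <- Hk in Htau_k.
      split; [rewrite Htau_k; field; lra | exists k, s; auto].
  - intros Hb Hab (tau & omega & Htau & Homega & Hroot).
    apply Phi_imaginary_root_iff in Hroot as [_ Hnorm]; [| lra | lra].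
    assert (0 < tau ^ 4) by (apply pow_lt; lra).
    assert (0 < omega ^ 2) by nra.
    nra.
Qed.
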